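(* Given $\varepsilon>0$ and $q\in(1,\infty)$, the following holds for all sufficiently large $m\in\mathbb{N}$. Suppose $\mu,\nu$ are $2^{-m}$-measures with $\|\mu*\nu\|_q\ge2^{-\varepsilon m}\|\mu\|_q$. Then there exist integers $j,j'\le2\varepsilon q'm$ such that, setting \[ A=\{x:2^{-j-1}\|\mu\|_q^{q'}<\mu(x)\le2^{-j}\|\mu\|_q^{q'}\},\qquad B=\{y:2^{-j'-1}2^{-m}<\nu(y)\le2^{-j'}2^{-m}\}, \] we have: (i) $\|\mathbf{1}_A*\mathbf{1}_B\|_q\ge2^{-2\varepsilon m}\|\mathbf{1}_A\|_q\|\mathbf{1}_B\|_1$; (ii) $\|\mu|_A\|_q\ge2^{-2\varepsilon m}\|\mu\|_q$; (iii) $\nu(B)\ge2^{-2\varepsilon m}$.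
   Context: A $2^{-m}$-measure is a probability measure supported on $2^{-m}\mathbb{Z}\cap[0,1)$, viewed on the circle $\mathbb{R}/\mathbb{Z}$, where convolutions are taken. For finitely supported $f$ (measure or function), $\|f\|_q=(\sum_y f(y)^q)^{1/q}$; $q'=q/(q-1)$. *)

From Stdlib Require Import Reals Lra Lia ZArith Arith.
Open Scope R_scope.

Fixpoint sumN (n : nat) (f : nat -> R) : R :=
  match n with
  | O => 0
  | S k => sumN k f + f k
  end.

(* x^y for x >= 0, y > 0, with the convention 0^y = 0
   (Stdlib's Rpower 0 y = 1, which is wrong here). *)
Definition powr (x y : R) : R := if Rle_dec x 0 then 0 else Rpower x y.

(* The grid 2^{-m} Z ∩ [0,1) is identified with {0,...,2^m - 1}:
   index k <-> point k / 2^m.  Functions on the grid are nat -> R;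
   only values at k < 2^m matter. *)
Definition grid (m : nat) : nat := (2 ^ m)%nat.

Definition is_measure (m : nat) (mu : nat -> R) : Prop :=
  (forall k, (k < grid m)%nat -> 0 <= mu k) /\ sumN (grid m) mu = 1.

(* Convolution on R/Z restricted to the grid (= Z/2^m Z). *)
Definition conv (m : nat) (f g : nat -> R) (x : nat) : R :=
  sumN (grid m) (fun y => f y * g ((x + grid m - y) mod grid m)%nat).

Definition lqnorm (m : nat) (q : R) (f : nat -> R) : R :=
  powr (sumN (grid m) (fun y => powr (f y) q)) (1 / q).

Definition conj_exp (q : R) : R := q / (q - 1).

Definition band (a b : R) (f : nat -> R) (x : nat) : R :=
  if Rlt_dec a (f x) then (if Rle_dec (f x) b then 1 else 0) else 0.

Definition indA (m : nat) (q : R) (mu : nat -> R) (j : Z) : nat -> R :=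
  let M := powr (lqnorm m q mu) (conj_exp q) in
  band (powerRZ 2 (- j - 1) * M) (powerRZ 2 (- j) * M) mu.

Definition indB (m : nat) (nu : nat -> R) (j' : Z) : nat -> R :=
  let s := powerRZ 2 (- Z.of_nat m) in
  band (powerRZ 2 (- j' - 1) * s) (powerRZ 2 (- j') * s) nu.

Definition restrict (ind mu : nat -> R) (x : nat) : R := ind x * mu x.

Definition mass (m : nat) (ind nu : nat -> R) : R :=
  sumN (grid m) (fun y => ind y * nu y).

(* Split [mu] and [nu] into their parts below thresholds [c ~ 2^(-eps q' m) ||mu||_q^q'] and
   [c' ~ 2^(-eps q' m - m)], plus dyadic level sets [{2^i c < mu <= 2^(i+1) c}] (resp. for [nu]);
   there are only [O(m)] levels. By [||h||_q^q <= ||h||_oo^(q-1) ||h||_1], the low parts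
   contribute at most [2^(-2 eps q m) ||mu||_q^q] to [||mu*nu||_q^q], which is at least
   [2^(-eps q m) ||mu||_q^q]; since the number of pairs of levels is polynomial in [m], some pair
   [(A, B)] carries [||mu|_A * nu|_B||_q^q >= 4^q 2^(-2 eps q m) ||mu||_q^q] once [m] is large.
   On a level set [mu] (resp. [nu]) is constant up to a factor [2], which turns this single
   estimate into (i), (ii) and (iii). *)

From Stdlib Require Import Reals Lra Lia ZArith Arith Classical.
Open Scope R_scope.

Lemma sumN_ext n f g : (forall k, (k < n)%nat -> f k = g k) -> sumN n f = sumN n g.
Proof. induction n; simpl; intros H; [reflexivity|]. rewrite IHn, H; auto. Qed.

Lemma sumN_le n f g : (forall k, (k < n)%nat -> f k <= g k) -> sumN n f <= sumN n g.
Proof.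
  induction n; simpl; intros H; [lra|].
  assert (f n <= g n) by auto. assert (sumN n f <= sumN n g) by auto. lra.
Qed.

Lemma sumN_const n c : sumN n (fun _ => c) = INR n * c.
Proof. induction n; simpl sumN; [simpl; lra|]. rewrite IHn, S_INR; lra. Qed.

Lemma sumN_nonneg n f : (forall k, (k < n)%nat -> 0 <= f k) -> 0 <= sumN n f.
Proof.
  intros H. apply Rle_trans with (sumN n (fun _ => 0)).
  - rewrite sumN_const; lra.
  - apply sumN_le; auto.
Qed.

Lemma sumN_plus n f g : sumN n (fun k => f k + g k) = sumN n f + sumN n g.
Proof. induction n; simpl; [lra|]. rewrite IHn; lra. Qed.

Lemma sumN_scal n c f : sumN n (fun k => c * f k) = c * sumN n f.
Proof. induction n; simpl; [lra|]. rewrite IHn; lra. Qed.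

Lemma sumN_swap n p (f : nat -> nat -> R) :
  sumN n (fun i => sumN p (fun j => f i j)) = sumN p (fun j => sumN n (fun i => f i j)).
Proof.
  induction n; simpl.
  - induction p; simpl; auto. rewrite <- IHp; lra.
  - rewrite IHn, <- sumN_plus. reflexivity.
Qed.

Lemma sumN_term_le n f k :
  (forall i, (i < n)%nat -> 0 <= f i) -> (k < n)%nat -> f k <= sumN n f.
Proof.
  induction n; intros H Hk; [lia|]. simpl.
  destruct (Nat.eq_dec k n) as [->|Hne].
  - assert (0 <= sumN n f) by (apply sumN_nonneg; auto). lra.
  - assert (f k <= sumN n f) by (apply IHn; auto; lia). assert (0 <= f n) by auto. lra.
Qed.

Lemma sumN_argmax n f :
  (0 < n)%nat -> exists i, (i < n)%nat /\ forall k, (k < n)%nat -> f k <= f i.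
Proof.
  induction n as [|n IH]; intros H; [lia|]. destruct (Nat.eq_dec n 0) as [->|Hn].
  - exists 0%nat; split; auto. intros k Hk; replace k with 0%nat by lia; lra.
  - destruct IH as [i [Hi Hm]]; [lia|].
    destruct (Rle_dec (f n) (f i)).
    + exists i; split; [lia|]. intros k Hk.
      destruct (Nat.eq_dec k n) as [->|]; auto. apply Hm; lia.
    + exists n; split; [lia|]. intros k Hk.
      destruct (Nat.eq_dec k n) as [->|]; [lra|].
      assert (f k <= f i) by (apply Hm; lia). lra.
Qed.

Lemma sumN_add a b f : sumN (a + b) f = sumN a f + sumN b (fun i => f (a + i)%nat).
Proof.
  induction b; simpl; [rewrite Nat.add_0_r; lra|].
  rewrite Nat.add_succ_r. simpl. rewrite IHb. lra.
Qed.

Lemma sumN_rev n f : sumN n f = sumN n (fun i => f (n - 1 - i)%nat).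
Proof.
  induction n; [reflexivity|].
  change (sumN (S n) (fun i => f (S n - 1 - i)%nat))
    with (sumN (1 + n) (fun i => f (S n - 1 - i)%nat)).
  rewrite sumN_add. simpl sumN. rewrite IHn, Rplus_0_l, Rplus_comm. f_equal.
  - f_equal. lia.
  - apply sumN_ext. intros k Hk. f_equal. lia.
Qed.

Lemma sumN_cshift N c g : (c <= N)%nat ->
  sumN N (fun x => g ((x + c) mod N)%nat) = sumN N g.
Proof.
  intros Hc.
  assert (E1 : forall F, sumN N F = sumN ((N - c) + c) F) by (intros; f_equal; lia).
  assert (E2 : forall F, sumN N F = sumN (c + (N - c)) F) by (intros; f_equal; lia).
  rewrite E1, (E2 g), !sumN_add, Rplus_comm. f_equal.
  - apply sumN_ext. intros k Hk. f_equal.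
    replace (N - c + k + c)%nat with (k + 1 * N)%nat by lia.
    rewrite Nat.Div0.mod_add, Nat.mod_small; lia.
  - apply sumN_ext. intros k Hk. f_equal. rewrite Nat.mod_small; lia.
Qed.

Lemma powr_nonneg x y : 0 <= powr x y.
Proof. unfold powr. destruct (Rle_dec x 0); [lra|]. unfold Rpower. left; apply exp_pos. Qed.

Lemma powr_pos x y : 0 < x -> powr x y = Rpower x y.
Proof. unfold powr. destruct (Rle_dec x 0); [lra|auto]. Qed.

Lemma powr_0 y : powr 0 y = 0.
Proof. unfold powr. destruct (Rle_dec 0 0); lra. Qed.

Lemma powr_gt0 x y : 0 < x -> 0 < powr x y.
Proof. intros. rewrite powr_pos by auto. unfold Rpower; apply exp_pos. Qed.

Lemma powr_le y a b : 0 <= y -> 0 <= a <= b -> powr a y <= powr b y.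
Proof.
  intros Hy [[Ha| <-] Hab].
  - rewrite !powr_pos by lra. apply Rle_Rpower_l; lra.
  - rewrite powr_0. apply powr_nonneg.
Qed.

Lemma powr_lt y a b : 0 < y -> 0 <= a < b -> powr a y < powr b y.
Proof.
  intros Hy [[Ha| <-] Hab].
  - rewrite !powr_pos by lra. apply Rlt_Rpower_l; lra.
  - rewrite powr_0. apply powr_gt0; lra.
Qed.

Lemma powr_le_inv y a b : 0 < y -> 0 <= a -> 0 <= b -> powr a y <= powr b y -> a <= b.
Proof.
  intros Hy Ha Hb H. destruct (Rle_dec a b); auto.
  assert (powr b y < powr a y) by (apply powr_lt; lra). lra.
Qed.

Lemma powr_mul y a b : 0 <= a -> 0 <= b -> powr (a * b) y = powr a y * powr b y.
Proof.
  intros [Ha| <-] [Hb| <-]; rewrite ?Rmult_0_l, ?Rmult_0_r, ?powr_0; try lra.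
  rewrite !powr_pos by (try apply Rmult_lt_0_compat; lra). symmetry; apply Rpower_mult_distr; auto.
Qed.

Lemma powr_powr y z a : 0 <= a -> powr (powr a y) z = powr a (y * z).
Proof.
  intros [Ha| <-]; [|rewrite !powr_0; auto].
  rewrite (powr_pos a y), powr_pos, powr_pos by (auto; unfold Rpower; apply exp_pos).
  apply Rpower_mult.
Qed.

Lemma powr_plus y z a : 0 <= a -> powr a (y + z) = powr a y * powr a z.
Proof.
  intros [Ha| <-]; [|rewrite !powr_0; lra]. rewrite !powr_pos by auto. apply Rpower_plus.
Qed.

Lemma powr_1r a : 0 <= a -> powr a 1 = a.
Proof. intros [Ha| <-]; [|apply powr_0]. rewrite powr_pos by auto. apply Rpower_1; auto. Qed.

Lemma powr_1l y : powr 1 y = 1.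
Proof. rewrite powr_pos by lra. unfold Rpower. rewrite ln_1, Rmult_0_r. apply exp_0. Qed.

Lemma powr_pred q a : 0 <= a -> powr a q = powr a (q - 1) * a.
Proof. intros Ha. replace q with ((q - 1) + 1) at 1 by lra. rewrite powr_plus, powr_1r; auto. Qed.

Lemma powr_succ q a : 0 <= a -> powr a (q + 1) = powr a q * a.
Proof. intros Ha. rewrite powr_plus, powr_1r; auto. Qed.

Lemma powr_root q a : 0 < q -> 0 <= a -> powr (powr a q) (1 / q) = a.
Proof. intros. rewrite powr_powr by auto. replace (q * (1 / q)) with 1 by (field; lra). apply powr_1r; auto. Qed.

Lemma powr_le1 y a : 0 <= y -> 0 <= a <= 1 -> powr a y <= 1.
Proof. intros. rewrite <- (powr_1l y). apply powr_le; lra. Qed.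

Lemma powr_ge1 a y : 0 <= y -> 1 <= a -> 1 <= powr a y.
Proof. intros. rewrite <- (powr_1l y). apply powr_le; lra. Qed.

Lemma powr_le_exp a y z : 1 <= a -> y <= z -> powr a y <= powr a z.
Proof. intros. rewrite !powr_pos by lra. apply Rle_Rpower; auto. Qed.

Lemma powr_add_le q a b : 0 < q -> 0 <= a -> 0 <= b ->
  powr (a + b) q <= powr 2 q * (powr a q + powr b q).
Proof.
  intros Hq Ha Hb. pose proof (powr_nonneg a q). pose proof (powr_nonneg b q).
  pose proof (powr_nonneg 2 q).
  destruct (Rle_dec a b).
  - apply Rle_trans with (powr (2 * b) q); [apply powr_le; lra|].
    rewrite powr_mul by lra. nra.
  - apply Rle_trans with (powr (2 * a) q); [apply powr_le; lra|].
    rewrite powr_mul by lra. nra.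
Qed.

Lemma powr_sumN_le q n a : 0 < q -> (forall i, (i < n)%nat -> 0 <= a i) ->
  powr (sumN n a) q <= powr (INR n) q * sumN n (fun i => powr (a i) q).
Proof.
  intros Hq Ha. destruct n as [|n]; [simpl; rewrite powr_0; lra|].
  destruct (sumN_argmax (S n) a) as [i [Hi Hm]]; [lia|].
  assert (sumN (S n) a <= INR (S n) * a i) by (rewrite <- sumN_const; apply sumN_le; auto).
  apply Rle_trans with (powr (INR (S n) * a i) q).
  - apply powr_le; [lra|]. split; auto. apply sumN_nonneg; auto.
  - rewrite powr_mul by (auto; apply pos_INR).
    apply Rmult_le_compat_l; [apply powr_nonneg|].
    apply (sumN_term_le (S n) (fun i => powr (a i) q)); auto. intros; apply powr_nonneg.
Qed.

Lemma powr_root_le q A B c : 0 < q -> 0 <= A -> 0 <= B -> 0 <= c ->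
  powr c q * B <= A -> c * powr B (1 / q) <= powr A (1 / q).
Proof.
  intros Hq HA HB Hc H. rewrite <- (powr_root q c), <- powr_mul by (auto; apply powr_nonneg).
  apply powr_le; [left; apply Rdiv_lt_0_compat; lra|].
  split; [apply Rmult_le_pos; auto; apply powr_nonneg|lra].
Qed.

Lemma powr_le_of_root_le q A B c : 0 < q -> 0 <= A -> 0 <= B -> 0 <= c ->
  c * powr B (1 / q) <= powr A (1 / q) -> powr c q * B <= A.
Proof.
  intros Hq HA HB Hc H.
  assert (E : forall X, 0 <= X -> powr (powr X (1 / q)) q = X).
  { intros X HX. rewrite powr_powr by auto. replace (1 / q * q) with 1 by (field; lra).
    apply powr_1r; auto. }
  rewrite <- (E A HA), <- (E B HB), <- powr_mul by (auto; apply powr_nonneg).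
  apply powr_le; [lra|]. split; [apply Rmult_le_pos; auto; apply powr_nonneg|lra].
Qed.

Definition exp2 (x : R) : R := Rpower 2 x.

Lemma exp2_pos x : 0 < exp2 x.
Proof. unfold exp2, Rpower. apply exp_pos. Qed.
Lemma exp2_plus x y : exp2 (x + y) = exp2 x * exp2 y.
Proof. apply Rpower_plus. Qed.
Lemma exp2_le x y : x <= y -> exp2 x <= exp2 y.
Proof. intros; apply Rle_Rpower; lra. Qed.
Lemma exp2_0 : exp2 0 = 1.
Proof. apply Rpower_O; lra. Qed.
Lemma exp2_1 : exp2 1 = 2.
Proof. apply Rpower_1; lra. Qed.
Lemma exp2_INR n : exp2 (INR n) = 2 ^ n.
Proof. apply Rpower_pow; lra. Qed.
Lemma exp2_opp x : exp2 (- x) = / exp2 x.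
Proof. apply Rpower_Ropp. Qed.
Lemma powr_exp2 x y : powr (exp2 x) y = exp2 (x * y).
Proof. rewrite powr_pos by apply exp2_pos. apply Rpower_mult. Qed.
Lemma powr_2 q : powr 2 q = exp2 q.
Proof. apply powr_pos; lra. Qed.
Lemma powerRZ_exp2 z : powerRZ 2 z = exp2 (IZR z).
Proof. apply powerRZ_Rpower; lra. Qed.
Lemma grid_exp2 m : INR (grid m) = exp2 (INR m).
Proof. unfold grid. rewrite pow_INR, exp2_INR. reflexivity. Qed.

Lemma grid_pos m : (0 < grid m)%nat.
Proof. unfold grid. apply Nat.neq_0_lt_0, Nat.pow_nonzero. lia. Qed.

Lemma conv_index_lt m x y : ((x + grid m - y) mod grid m < grid m)%nat.
Proof. apply Nat.mod_upper_bound. pose proof (grid_pos m). lia. Qed.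

Section Grid.
Variable m : nat.
Notation N := (grid m).

Lemma conv_nonneg f g x :
  (forall k, (k < N)%nat -> 0 <= f k) -> (forall k, (k < N)%nat -> 0 <= g k) ->
  0 <= conv m f g x.
Proof.
  intros Hf Hg. apply sumN_nonneg. intros k Hk.
  apply Rmult_le_pos; auto. apply Hg, conv_index_lt.
Qed.

Lemma conv_le f g f' g' x :
  (forall k, (k < N)%nat -> 0 <= f k <= f' k) -> (forall k, (k < N)%nat -> 0 <= g k <= g' k) ->
  conv m f g x <= conv m f' g' x.
Proof.
  intros Hf Hg. apply sumN_le. intros k Hk.
  destruct (Hf k Hk), (Hg _ (conv_index_lt m x k)). apply Rmult_le_compat; lra.
Qed.

Lemma conv_addl f1 f2 g x :
  conv m (fun z => f1 z + f2 z) g x = conv m f1 g x + conv m f2 g x.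
Proof. unfold conv. rewrite <- sumN_plus. apply sumN_ext; intros; lra. Qed.

Lemma conv_addr f g1 g2 x :
  conv m f (fun z => g1 z + g2 z) x = conv m f g1 x + conv m f g2 x.
Proof. unfold conv. rewrite <- sumN_plus. apply sumN_ext; intros; lra. Qed.

Lemma conv_suml L F g x :
  conv m (fun z => sumN L (fun i => F i z)) g x = sumN L (fun i => conv m (F i) g x).
Proof.
  unfold conv. rewrite sumN_swap. apply sumN_ext; intros.
  rewrite Rmult_comm, <- sumN_scal. apply sumN_ext; intros; lra.
Qed.

Lemma conv_sumr L f G x :
  conv m f (fun z => sumN L (fun i => G i z)) x = sumN L (fun i => conv m f (G i) x).
Proof.
  unfold conv. rewrite sumN_swap. apply sumN_ext; intros.
  rewrite <- sumN_scal. apply sumN_ext; intros; lra.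
Qed.

Lemma conv_scal a b f g x :
  conv m (fun z => a * f z) (fun z => b * g z) x = a * b * conv m f g x.
Proof. unfold conv. rewrite <- sumN_scal. apply sumN_ext; intros; lra. Qed.

Lemma sumN_reflect g x : (x < N)%nat ->
  sumN N (fun y => g ((x + N - y) mod N)%nat) = sumN N g.
Proof.
  intros Hx. rewrite sumN_rev, <- (sumN_cshift N (S x) g) by lia.
  apply sumN_ext. intros k Hk. do 2 f_equal. lia.
Qed.

Lemma conv_le_sumr f g c x :
  (forall k, (k < N)%nat -> 0 <= f k) -> (forall k, (k < N)%nat -> g k <= c) ->
  conv m f g x <= c * sumN N f.
Proof.
  intros Hf Hg. unfold conv. rewrite <- sumN_scal. apply sumN_le. intros k Hk.
  specialize (Hf k Hk). specialize (Hg _ (conv_index_lt m x k)). nra.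
Qed.

Lemma conv_le_suml f g c x : (x < N)%nat ->
  (forall k, (k < N)%nat -> f k <= c) -> (forall k, (k < N)%nat -> 0 <= g k) ->
  conv m f g x <= c * sumN N g.
Proof.
  intros Hx Hf Hg. rewrite <- (sumN_reflect g x Hx), <- sumN_scal.
  apply sumN_le. intros k Hk.
  specialize (Hf k Hk). specialize (Hg _ (conv_index_lt m x k)). nra.
Qed.

Lemma sumN_conv f g : sumN N (conv m f g) = sumN N f * sumN N g.
Proof.
  unfold conv. rewrite sumN_swap, Rmult_comm, <- sumN_scal. apply sumN_ext. intros y Hy.
  rewrite (sumN_scal N (f y) (fun x => g ((x + N - y) mod N)%nat)).
  rewrite <- (sumN_cshift N (N - y) g), Rmult_comm by lia. f_equal.
  apply sumN_ext. intros k Hk. do 2 f_equal. lia.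
Qed.

Definition powsum (q : R) (f : nat -> R) : R := sumN N (fun y => powr (f y) q).

Lemma lqnorm_powsum q f : lqnorm m q f = powr (powsum q f) (1 / q).
Proof. reflexivity. Qed.

Lemma powsum_nonneg q f : 0 <= powsum q f.
Proof. apply sumN_nonneg; intros; apply powr_nonneg. Qed.

Lemma powsum_le q f g : 0 <= q ->
  (forall k, (k < N)%nat -> 0 <= f k <= g k) -> powsum q f <= powsum q g.
Proof. intros. apply sumN_le; intros. apply powr_le; auto. Qed.

Lemma powsum_scal q a f : 0 <= a -> (forall k, (k < N)%nat -> 0 <= f k) ->
  powsum q (fun x => a * f x) = powr a q * powsum q f.
Proof.
  intros Ha Hf. unfold powsum. rewrite <- sumN_scal. apply sumN_ext. intros. apply powr_mul; auto.
Qed.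

Lemma powsum_le_sumN q f c : 1 < q -> (forall k, (k < N)%nat -> 0 <= f k <= c) ->
  powsum q f <= powr c (q - 1) * sumN N f.
Proof.
  intros Hq H. unfold powsum. rewrite <- sumN_scal. apply sumN_le. intros k Hk.
  destruct (H k Hk). rewrite powr_pred by auto.
  apply Rmult_le_compat_r; auto. apply powr_le; lra.
Qed.

Lemma sumN_le_powsum q f c : 1 < q -> 0 <= c ->
  (forall k, (k < N)%nat -> f k = 0 \/ c <= f k) ->
  powr c (q - 1) * sumN N f <= powsum q f.
Proof.
  intros Hq Hc H. unfold powsum. rewrite <- sumN_scal. apply sumN_le. intros k Hk.
  destruct (H k Hk) as [E|E].
  - rewrite E, Rmult_0_r, powr_0. lra.
  - rewrite (powr_pred q) by lra. apply Rmult_le_compat_r; [lra|]. apply powr_le; lra.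
Qed.

(* [||h||_q^q <= ||h||_oo^(q-1) ||h||_1] for [h = f*g], with [||f*g||_oo <= ||f||_oo ||g||_1]. *)
Lemma powsum_conv_le_suml q f g c : 1 < q ->
  (forall k, (k < N)%nat -> 0 <= f k <= c) -> (forall k, (k < N)%nat -> 0 <= g k) ->
  powsum q (conv m f g) <= powr (c * sumN N g) (q - 1) * (sumN N f * sumN N g).
Proof.
  intros Hq Hf Hg. rewrite <- sumN_conv. apply powsum_le_sumN; auto. intros k Hk. split.
  - apply conv_nonneg; intros; [apply Hf|apply Hg]; auto.
  - apply conv_le_suml; auto. intros; apply Hf; auto.
Qed.

Lemma powsum_conv_le_sumr q f g c : 1 < q ->
  (forall k, (k < N)%nat -> 0 <= f k) -> (forall k, (k < N)%nat -> 0 <= g k <= c) ->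
  powsum q (conv m f g) <= powr (c * sumN N f) (q - 1) * (sumN N f * sumN N g).
Proof.
  intros Hq Hf Hg. rewrite <- sumN_conv. apply powsum_le_sumN; auto. intros k Hk. split.
  - apply conv_nonneg; intros; [apply Hf|apply Hg]; auto.
  - apply conv_le_sumr; auto. intros; apply Hg; auto.
Qed.

Lemma lqnorm_1 f : (forall k, (k < N)%nat -> 0 <= f k) -> lqnorm m 1 f = sumN N f.
Proof.
  intros Hf. unfold lqnorm. replace (1 / 1) with 1 by field.
  rewrite powr_1r by (apply sumN_nonneg; intros; apply powr_nonneg).
  apply sumN_ext. intros. apply powr_1r; auto.
Qed.

Lemma measure_le1 mu k : is_measure m mu -> (k < N)%nat -> 0 <= mu k <= 1.
Proof. intros [H1 H2] Hk. split; auto. rewrite <- H2. apply (sumN_term_le N mu); auto. Qed.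

(* At least half of the mass of [mu] sits on atoms of mass at least [2^-(m+1)]. *)
Lemma powsum_measure_ge q mu : 1 < q -> is_measure m mu ->
  exp2 (- (INR m + 1) * (q - 1)) / 2 <= powsum q mu.
Proof.
  intros Hq Hmu. set (e := exp2 (- (INR m + 1))).
  assert (He : e * INR N = / 2).
  { unfold e. rewrite grid_exp2, <- exp2_plus.
    replace (- (INR m + 1) + INR m) with (- (1)) by ring. rewrite exp2_opp, exp2_1. reflexivity. }
  assert (He0 : 0 < e) by apply exp2_pos.
  set (g := fun x => if Rle_dec e (mu x) then mu x else 0).
  assert (Hg : forall k, (k < N)%nat -> 0 <= g k <= mu k).
  { intros k Hk. pose proof (measure_le1 mu k Hmu Hk). unfold g. destruct (Rle_dec e (mu k)); lra. }
  assert (Hsum : / 2 <= sumN N g).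
  { destruct Hmu as [_ H1]. assert (sumN N mu <= sumN N (fun x => g x + e)).
    { apply sumN_le. intros k Hk. unfold g. destruct (Rle_dec e (mu k)); lra. }
    rewrite sumN_plus, sumN_const in H. lra. }
  apply Rle_trans with (powsum q g); [|apply powsum_le; auto; lra].
  apply Rle_trans with (powr e (q - 1) * sumN N g).
  - unfold e. rewrite powr_exp2. pose proof (exp2_pos (- (INR m + 1) * (q - 1))). nra.
  - apply sumN_le_powsum; [lra|lra|]. intros k Hk. unfold g. destruct (Rle_dec e (mu k)); lra.
Qed.

Lemma powsum_measure_pos q mu : 1 < q -> is_measure m mu -> 0 < powsum q mu.
Proof.
  intros Hq Hmu. pose proof (powsum_measure_ge q mu Hq Hmu).
  pose proof (exp2_pos (- (INR m + 1) * (q - 1))). lra.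
Qed.

End Grid.

(** * Dyadic level sets *)

Definition dyadic_band (a : R) (f : nat -> R) : nat -> R := band a (2 * a) f.

Definition low_part (c : R) (f : nat -> R) (x : nat) : R :=
  if Rle_dec (f x) c then f x else 0.

Lemma dyadic_band_01 a f x : dyadic_band a f x = 0 \/ dyadic_band a f x = 1.
Proof. unfold dyadic_band, band. destruct (Rlt_dec a (f x)); [destruct (Rle_dec (f x) (2 * a))|]; auto. Qed.

Lemma dyadic_band_nonneg a f x : 0 <= dyadic_band a f x.
Proof. destruct (dyadic_band_01 a f x) as [E|E]; lra. Qed.

Lemma dyadic_band_eq1 a f x : dyadic_band a f x = 1 <-> a < f x <= 2 * a.
Proof.
  unfold dyadic_band, band.
  destruct (Rlt_dec a (f x)); [destruct (Rle_dec (f x) (2 * a))|]; split; intros; lra.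
Qed.

Lemma restrict_dyadic_band_bounds a f x : 0 <= f x ->
  0 <= restrict (dyadic_band a f) f x <= f x /\
  a * dyadic_band a f x <= restrict (dyadic_band a f) f x <= 2 * a * dyadic_band a f x.
Proof.
  intros Hf. unfold restrict. destruct (dyadic_band_01 a f x) as [E|E]; rewrite E; [lra|].
  apply dyadic_band_eq1 in E. lra.
Qed.

Lemma low_part_bounds c f x : 0 <= c -> 0 <= f x -> 0 <= low_part c f x <= f x /\ low_part c f x <= c.
Proof. intros. unfold low_part. destruct (Rle_dec (f x) c); lra. Qed.

Lemma dyadic_cover n c t : 0 < c -> c < t -> t <= 2 ^ n * c ->
  exists i, (i < n)%nat /\ 2 ^ i * c < t <= 2 * (2 ^ i * c).
Proof.
  intros Hc. revert t. induction n; intros t H1 H2; [simpl in H2; lra|].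
  destruct (Rle_dec t (2 ^ n * c)) as [Hle|Hgt].
  - destruct (IHn t H1 Hle) as [i [Hi Hb]]. exists i; split; [lia|auto].
  - exists n; split; [lia|]. simpl in H2. lra.
Qed.

Lemma low_part_dyadic_split f c n x : 0 < c -> 0 <= f x <= 1 -> 1 <= 2 ^ n * c ->
  f x <= low_part c f x + sumN n (fun i => restrict (dyadic_band (2 ^ i * c) f) f x).
Proof.
  intros Hc Hf Hn.
  assert (Hs : forall i, (i < n)%nat -> 0 <= restrict (dyadic_band (2 ^ i * c) f) f x)
    by (intros i _; apply (restrict_dyadic_band_bounds (2 ^ i * c) f x); lra).
  unfold low_part. destruct (Rle_dec (f x) c).
  - assert (0 <= sumN n (fun i => restrict (dyadic_band (2 ^ i * c) f) f x))
      by (apply sumN_nonneg; auto). lra.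
  - destruct (dyadic_cover n c (f x)) as [i [Hi Hb]]; try lra.
    eapply Rle_trans; [|apply Rplus_le_compat_l, (sumN_term_le n _ i); auto].
    unfold restrict. rewrite (proj2 (dyadic_band_eq1 _ f x)) by auto. lra.
Qed.

(** * Finding a heavy pair of level sets *)

Section Decomposition.
Variables (m : nat) (q : R) (f g ft gt : nat -> R) (F G : nat -> nat -> R) (L L' : nat).
Notation N := (grid m).
Hypothesis Hq : 0 < q.
Hypothesis Hft : forall k, (k < N)%nat -> 0 <= ft k.
Hypothesis Hgt : forall k, (k < N)%nat -> 0 <= gt k.
Hypothesis HF : forall i k, (k < N)%nat -> 0 <= F i k <= f k.
Hypothesis HG : forall i k, (k < N)%nat -> 0 <= G i k.
Hypothesis Hfd : forall k, (k < N)%nat -> 0 <= f k <= ft k + sumN L (fun i => F i k).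
Hypothesis Hgd : forall k, (k < N)%nat -> 0 <= g k <= gt k + sumN L' (fun i => G i k).

Lemma conv_le_decomp x :
  conv m f g x <= conv m ft g x +
    sumN L (fun i => conv m f gt x + sumN L' (fun i' => conv m (F i) (G i') x)).
Proof.
  apply Rle_trans with (conv m (fun z => ft z + sumN L (fun i => F i z)) g x).
  { apply conv_le; intros k Hk; [apply Hfd; auto|]. destruct (Hgd k Hk); lra. }
  rewrite conv_addl, conv_suml. apply Rplus_le_compat_l, sumN_le. intros i Hi.
  apply Rle_trans with (conv m (F i) (fun z => gt z + sumN L' (fun i' => G i' z)) x).
  { apply conv_le; intros k Hk; [destruct (HF i k Hk); lra|apply Hgd; auto]. }
  rewrite conv_addr, conv_sumr. apply Rplus_le_compat_r.
  apply conv_le; intros k Hk; [apply HF; auto|]. pose proof (Hgt k Hk). lra.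
Qed.

Lemma powr_conv_le_decomp x :
  powr (conv m f g x) q <= powr 2 q * powr (conv m ft g x) q + powr 2 q * powr (INR L) q *
    sumN L (fun i => powr 2 q * (powr (conv m f gt x) q + powr (INR L') q *
      sumN L' (fun i' => powr (conv m (F i) (G i') x) q))).
Proof.
  assert (HFG : forall i i', 0 <= conv m (F i) (G i') x)
    by (intros; apply conv_nonneg; intros; [apply HF|apply HG]; auto).
  assert (Hfgt : 0 <= conv m f gt x) by (apply conv_nonneg; intros; [apply Hfd|apply Hgt]; auto).
  assert (Hi : forall i, 0 <= conv m f gt x + sumN L' (fun i' => conv m (F i) (G i') x)).
  { intros. assert (0 <= sumN L' (fun i' => conv m (F i) (G i') x)) by (apply sumN_nonneg; auto).
    lra. }
  eapply Rle_trans.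
  { apply powr_le; [lra|]. split; [apply conv_nonneg; intros; [apply Hfd|apply Hgd]; auto|].
    apply conv_le_decomp. }
  eapply Rle_trans.
  { apply powr_add_le; auto; [apply conv_nonneg; intros; [apply Hft|apply Hgd]; auto|].
    apply sumN_nonneg; auto. }
  rewrite Rmult_plus_distr_l, Rmult_assoc. apply Rplus_le_compat_l.
  apply Rmult_le_compat_l; [apply powr_nonneg|].
  eapply Rle_trans; [apply powr_sumN_le; auto|]. apply Rmult_le_compat_l; [apply powr_nonneg|].
  apply sumN_le. intros i _.
  eapply Rle_trans; [apply powr_add_le; auto; apply sumN_nonneg; auto|].
  apply Rmult_le_compat_l; [apply powr_nonneg|]. apply Rplus_le_compat_l.
  apply powr_sumN_le; auto.
Qed.

Lemma powsum_conv_decomp :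
  powsum m q (conv m f g) <= powr 2 q * powsum m q (conv m ft g) + powr 2 q * powr (INR L) q *
    sumN L (fun i => powr 2 q * (powsum m q (conv m f gt) + powr (INR L') q *
      sumN L' (fun i' => powsum m q (conv m (F i) (G i'))))).
Proof.
  unfold powsum at 1. eapply Rle_trans; [apply sumN_le; intros x _; apply powr_conv_le_decomp|].
  right. rewrite sumN_plus, (sumN_scal N (powr 2 q)), (sumN_scal N (powr 2 q * powr (INR L) q)).
  do 2 f_equal. unfold powsum. rewrite sumN_swap. apply sumN_ext; intros i _.
  rewrite (sumN_scal N (powr 2 q)), sumN_plus, (sumN_scal N (powr (INR L') q)), sumN_swap.
  reflexivity.
Qed.

End Decomposition.

Section HeavyPair.
Variables (m : nat) (q al be e : R) (mu nu : nat -> R).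
Notation N := (grid m).
Hypothesis Hq : 1 < q.
Hypothesis Hmu : is_measure m mu.
Hypothesis Hnu : is_measure m nu.
Hypothesis Hal : 0 < al.
Hypothesis Hbe : 0 < be.
Hypothesis He : 0 <= e.

Let IA := dyadic_band al mu.
Let IB := dyadic_band be nu.
Let muA := restrict IA mu.
Let nuB := restrict IB nu.

Hypothesis Hheavy :
  powr 4 q * powr e q * powsum m q mu <= powsum m q (conv m muA nuB).

Let muA_bounds k : (k < N)%nat -> 0 <= muA k <= mu k /\ al * IA k <= muA k <= 2 * al * IA k.
Proof. intros Hk. apply restrict_dyadic_band_bounds, (measure_le1 m mu k Hmu Hk). Qed.

Let nuB_bounds k : (k < N)%nat -> 0 <= nuB k <= nu k /\ be * IB k <= nuB k <= 2 * be * IB k.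
Proof. intros Hk. apply restrict_dyadic_band_bounds, (measure_le1 m nu k Hnu Hk). Qed.

Let powr_2_pred_le_4 : 0 < powr 2 (q - 1) <= powr 4 q.
Proof.
  split; [apply powr_gt0; lra|]. apply Rle_trans with (powr 2 q).
  - apply powr_le_exp; lra.
  - apply powr_le; lra.
Qed.

Lemma mass_dyadic_band_bounds : 0 <= mass m IB nu <= 1.
Proof.
  split; [apply sumN_nonneg; intros; apply nuB_bounds; auto|].
  destruct Hnu as [_ H1]. rewrite <- H1. apply sumN_le. intros. apply nuB_bounds; auto.
Qed.

Lemma powsum_conv_restrict_le_mass :
  powsum m q (conv m muA nuB) <= powr 2 (q - 1) * powr (mass m IB nu) q * powsum m q muA.
Proof.
  set (nB := mass m IB nu). pose proof mass_dyadic_band_bounds as Hn. fold nB in Hn.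
  set (mA := sumN N muA).
  assert (HmA : 0 <= mA) by (apply sumN_nonneg; intros; apply muA_bounds; auto).
  assert (H1 : powsum m q (conv m muA nuB) <= powr (2 * al * nB) (q - 1) * (mA * nB)).
  { apply powsum_conv_le_suml; auto.
    - intros k Hk. destruct (muA_bounds k Hk) as [? ?].
      pose proof (dyadic_band_nonneg al mu k). destruct (dyadic_band_01 al mu k) as [E|E];
      fold IA in E; rewrite E in *; lra.
    - intros k Hk. apply nuB_bounds; auto. }
  assert (H2 : powr al (q - 1) * mA <= powsum m q muA).
  { apply sumN_le_powsum; auto; [lra|]. intros k Hk. destruct (muA_bounds k Hk) as [_ ?].
    destruct (dyadic_band_01 al mu k) as [E|E]; fold IA in E; rewrite E in *; [left|right]; lra. }
  rewrite !powr_mul in H1 by lra. rewrite (powr_pred q nB) by lra.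
  pose proof (powr_nonneg nB (q - 1)). pose proof (powr_nonneg al (q - 1)).
  pose proof powr_2_pred_le_4.
  apply Rle_trans with (1 := H1).
  replace (powr 2 (q - 1) * powr al (q - 1) * powr nB (q - 1) * (mA * nB))
    with (powr 2 (q - 1) * (powr nB (q - 1) * nB) * (powr al (q - 1) * mA)) by ring.
  apply Rmult_le_compat_l; [|auto]. apply Rmult_le_pos; [lra|]. apply Rmult_le_pos; lra.
Qed.

Lemma powsum_conv_restrict_le_ind :
  powsum m q (conv m muA nuB) <= powr (4 * al * be) q * powsum m q (conv m IA IB).
Proof.
  rewrite <- powsum_scal;
    [|nra|intros; apply conv_nonneg; intros; apply dyadic_band_nonneg].
  apply powsum_le; [lra|]. intros k Hk. split.
  - apply conv_nonneg; intros; [apply muA_bounds|apply nuB_bounds]; auto.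
  - replace (4 * al * be) with ((2 * al) * (2 * be)) by ring. rewrite <- conv_scal.
    apply conv_le; intros j Hj.
    + destruct (muA_bounds j Hj) as [[? _] [_ ?]]. lra.
    + destruct (nuB_bounds j Hj) as [[? _] [_ ?]]. lra.
Qed.

Lemma powsum_dyadic_band_le : powr al q * powsum m q IA <= powsum m q mu.
Proof.
  rewrite <- powsum_scal by (try lra; intros; apply dyadic_band_nonneg).
  apply powsum_le; [lra|]. intros k Hk. destruct (muA_bounds k Hk). split; [|lra].
  pose proof (dyadic_band_nonneg al mu k). fold IA in H1. nra.
Qed.

Lemma sumN_dyadic_band_le : be * sumN N IB <= 1.
Proof.
  rewrite <- sumN_scal. destruct mass_dyadic_band_bounds as [_ H]. eapply Rle_trans; [|apply H].
  apply sumN_le. intros k Hk. apply nuB_bounds; auto.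
Qed.

Let heavy_le_mass : powr 4 q * powr e q * powsum m q mu <= powr 2 (q - 1) * powr (mass m IB nu) q * powsum m q muA.
Proof. eapply Rle_trans; [apply Hheavy|apply powsum_conv_restrict_le_mass]. Qed.

Lemma heavy_restrict_lqnorm_ge : e * lqnorm m q mu <= lqnorm m q muA.
Proof.
  rewrite !lqnorm_powsum. apply powr_root_le; try lra; try apply powsum_nonneg.
  pose proof powr_2_pred_le_4. pose proof (powsum_nonneg m q muA).
  pose proof (powr_le1 q (mass m IB nu) ltac:(lra) mass_dyadic_band_bounds).
  pose proof (powr_nonneg (mass m IB nu) q).
  assert (powr 2 (q - 1) * powr (mass m IB nu) q <= powr 4 q) by nra.
  apply Rmult_le_reg_l with (powr 4 q); [lra|].
  rewrite <- Rmult_assoc. eapply Rle_trans; [apply heavy_le_mass|].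
  apply Rmult_le_compat_r; lra.
Qed.

Lemma heavy_mass_ge : e <= mass m IB nu.
Proof.
  apply (powr_le_inv q); try lra; [apply mass_dyadic_band_bounds|].
  assert (powsum m q muA <= powsum m q mu)
    by (apply powsum_le; [lra|]; intros; apply muA_bounds; auto).
  pose proof powr_2_pred_le_4. pose proof (powsum_nonneg m q muA).
  pose proof (powr_nonneg (mass m IB nu) q).
  assert (powr 2 (q - 1) * powr (mass m IB nu) q * powsum m q muA
          <= powr 4 q * powr (mass m IB nu) q * powsum m q mu)
    by (apply Rmult_le_compat; try apply Rmult_le_compat_r; nra).
  apply Rmult_le_reg_l with (powr 4 q); [lra|].
  apply Rmult_le_reg_r with (powsum m q mu); [apply powsum_measure_pos; auto|].
  pose proof heavy_le_mass. lra.
Qed.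

Lemma heavy_conv_lqnorm_ge : e * lqnorm m q IA * lqnorm m 1 IB <= lqnorm m q (conv m IA IB).
Proof.
  set (SB := sumN N IB).
  assert (HSB : 0 <= SB) by (apply sumN_nonneg; intros; apply dyadic_band_nonneg).
  rewrite lqnorm_1 by (intros; apply dyadic_band_nonneg). fold SB.
  rewrite !lqnorm_powsum, Rmult_assoc, <- (powr_root q SB), <- powr_mul
    by (try lra; try apply powsum_nonneg; apply powr_nonneg).
  apply powr_root_le; try lra; try apply powsum_nonneg.
  { apply Rmult_le_pos; [apply powsum_nonneg|apply powr_nonneg]. }
  pose proof powsum_dyadic_band_le as HA. fold IA in HA.
  assert (HB : powr be q * powr SB q <= 1)
    by (rewrite <- powr_mul by lra; apply powr_le1; [lra|]; split; [nra|apply sumN_dyadic_band_le]).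
  assert (Hconv : powr 4 q * powr e q * powsum m q mu
                  <= powr 4 q * (powr al q * powr be q) * powsum m q (conv m IA IB)).
  { eapply Rle_trans; [apply Hheavy|]. eapply Rle_trans; [apply powsum_conv_restrict_le_ind|].
    rewrite (powr_mul q (4 * al) be), (powr_mul q 4 al) by lra. right; ring. }
  pose proof (powr_gt0 4 q ltac:(lra)). pose proof (powr_gt0 al q Hal).
  pose proof (powr_gt0 be q Hbe). pose proof (powr_nonneg e q).
  pose proof (powsum_nonneg m q IA). pose proof (powr_nonneg SB q).
  assert (Hprod : powr al q * powr be q * (powsum m q IA * powr SB q) <= powsum m q mu).
  { replace (powr al q * powr be q * (powsum m q IA * powr SB q))
      with ((powr al q * powsum m q IA) * (powr be q * powr SB q)) by ring.
    apply Rle_trans with (powr al q * powsum m q IA * 1); [|lra].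
    apply Rmult_le_compat_l; [nra|auto]. }
  apply Rmult_le_reg_l with (powr 4 q * (powr al q * powr be q));
    [repeat apply Rmult_lt_0_compat; auto|].
  apply Rle_trans with (powr 4 q * powr e q * powsum m q mu); [|exact Hconv].
  replace (powr 4 q * (powr al q * powr be q) * (powr e q * (powsum m q IA * powr SB q)))
    with (powr 4 q * powr e q * (powr al q * powr be q * (powsum m q IA * powr SB q))) by ring.
  apply Rmult_le_compat_l; [apply Rmult_le_pos; lra|auto].
Qed.

End HeavyPair.

Lemma lqnorm_pow_conj_exp m q f : 1 < q ->
  powr (lqnorm m q f) (conj_exp q) = powr (powsum m q f) (1 / (q - 1)).
Proof.
  intros Hq. rewrite lqnorm_powsum, powr_powr by apply powsum_nonneg.
  f_equal. unfold conj_exp. field. lra.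
Qed.

Section Levels.
Variables (m : nat) (q E : R) (mu nu : nat -> R) (J K : nat).
Notation N := (grid m).
Hypothesis Hq : 1 < q.
Hypothesis Hmu : is_measure m mu.
Hypothesis Hnu : is_measure m nu.
Hypothesis HE : 0 < E.
Hypothesis HK : 1 + 1 / (q - 1) <= INR K.
Hypothesis HJ : exp2 ((- INR J - 1) * (q - 1)) <= E * E.

Let L := (J + 1 + m + K)%nat.
Let L' := (J + 1 + m)%nat.

Hypothesis Hsmall :
  4 * powr 16 q * (powr (INR L) (q + 1) * powr (INR L') (q + 1)) * E <= 1.
Hypothesis Hconv : E * powsum m q mu <= powsum m q (conv m mu nu).

Let S0 := powsum m q mu.
(* Level [i] of [mu] is the [dyadic_band] at [2^i c], which is [A] for [j = J - i]; likewise for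
   [nu] and [B]. [K] is chosen so that the [L] levels of [mu] reach the maximal mass [1]. *)
Let c := exp2 (- INR J - 1) * powr (lqnorm m q mu) (conj_exp q).
Let c' := exp2 (- INR J - 1 - INR m).
Let F i := restrict (dyadic_band (2 ^ i * c) mu) mu.
Let G i := restrict (dyadic_band (2 ^ i * c') nu) nu.

Let S0_ge : exp2 (- (INR m + 1) * (q - 1) - 1) <= S0.
Proof.
  replace (- (INR m + 1) * (q - 1) - 1) with (- (INR m + 1) * (q - 1) + - (1)) by ring.
  rewrite exp2_plus, exp2_opp, exp2_1. pose proof (powsum_measure_ge m q mu Hq Hmu). fold S0 in H.
  unfold Rdiv in H. lra.
Qed.

Let S0_pos : 0 < S0.
Proof. apply powsum_measure_pos; auto. Qed.

Let c_pow : powr c (q - 1) = exp2 ((- INR J - 1) * (q - 1)) * S0.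
Proof.
  unfold c. rewrite lqnorm_pow_conj_exp, powr_mul, powr_exp2, powr_powr by
    (auto; try (left; apply exp2_pos); try apply powsum_nonneg; apply powr_nonneg).
  replace (1 / (q - 1) * (q - 1)) with 1 by (field; lra).
  rewrite powr_1r by apply powsum_nonneg. reflexivity.
Qed.

Let c_pos : 0 < c.
Proof.
  apply Rmult_lt_0_compat; [apply exp2_pos|].
  rewrite lqnorm_pow_conj_exp by auto. apply powr_gt0, powsum_measure_pos; auto.
Qed.

Let c'_pos : 0 < c'.
Proof. apply exp2_pos. Qed.

Lemma dyadic_levels_cover_mu : 1 <= 2 ^ L * c.
Proof.
  assert (HM : exp2 (- (INR m + 1) - 1 / (q - 1)) <= powr (lqnorm m q mu) (conj_exp q)).
  { rewrite lqnorm_pow_conj_exp by auto.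
    replace (- (INR m + 1) - 1 / (q - 1)) with ((- (INR m + 1) * (q - 1) - 1) * (1 / (q - 1)))
      by (field; lra).
    rewrite <- powr_exp2. apply powr_le; [left; apply Rdiv_lt_0_compat; lra|].
    split; [left; apply exp2_pos|auto]. }
  unfold c. rewrite <- exp2_INR, <- Rmult_assoc, <- exp2_plus.
  apply Rle_trans with (exp2 (INR L + (- INR J - 1)) * exp2 (- (INR m + 1) - 1 / (q - 1))).
  2:{ apply Rmult_le_compat_l; [left; apply exp2_pos|auto]. }
  rewrite <- exp2_plus. apply Rle_trans with (exp2 0); [rewrite exp2_0; lra|apply exp2_le].
  unfold L. rewrite !plus_INR. simpl (INR 1). lra.
Qed.

Lemma dyadic_levels_cover_nu : 1 <= 2 ^ L' * c'.
Proof.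
  unfold c'. rewrite <- exp2_INR, <- exp2_plus.
  apply Rle_trans with (exp2 0); [rewrite exp2_0; lra|apply exp2_le].
  unfold L'. rewrite !plus_INR. simpl (INR 1). lra.
Qed.

Lemma powsum_conv_low_part_mu : powsum m q (conv m (low_part c mu) nu) <= E * E * S0.
Proof.
  destruct Hmu as [_ Hm1]. destruct Hnu as [_ Hn1].
  assert (Hlow : forall k, (k < N)%nat -> 0 <= low_part c mu k <= mu k /\ low_part c mu k <= c)
    by (intros; apply low_part_bounds; [lra|apply (measure_le1 m mu k Hmu); auto]).
  eapply Rle_trans.
  { apply powsum_conv_le_suml with (c := c); auto.
    - intros k Hk. destruct (Hlow k Hk). lra.
    - intros k Hk. apply (measure_le1 m nu k Hnu Hk). }
  assert (sumN N (low_part c mu) <= 1)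
    by (rewrite <- Hm1; apply sumN_le; intros; apply Hlow; auto).
  assert (0 <= sumN N (low_part c mu)) by (apply sumN_nonneg; intros; apply Hlow; auto).
  rewrite Hn1, !Rmult_1_r, c_pow.
  pose proof (exp2_pos ((- INR J - 1) * (q - 1))).
  apply Rle_trans with (exp2 ((- INR J - 1) * (q - 1)) * S0 * 1).
  - apply Rmult_le_compat_l; auto. apply Rmult_le_pos; lra.
  - rewrite Rmult_1_r. apply Rmult_le_compat_r; lra.
Qed.

Lemma powsum_conv_low_part_nu : powsum m q (conv m mu (low_part c' nu)) <= E * E * powr 2 q * S0.
Proof.
  destruct Hmu as [_ Hm1]. destruct Hnu as [_ Hn1].
  assert (Hlow : forall k, (k < N)%nat -> 0 <= low_part c' nu k <= nu k /\ low_part c' nu k <= c')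
    by (intros; apply low_part_bounds; [lra|apply (measure_le1 m nu k Hnu); auto]).
  eapply Rle_trans.
  { apply powsum_conv_le_sumr with (c := c'); auto.
    - intros k Hk. apply (measure_le1 m mu k Hmu Hk).
    - intros k Hk. destruct (Hlow k Hk). lra. }
  assert (sumN N (low_part c' nu) <= 1)
    by (rewrite <- Hn1; apply sumN_le; intros; apply Hlow; auto).
  assert (0 <= sumN N (low_part c' nu)) by (apply sumN_nonneg; intros; apply Hlow; auto).
  rewrite Hm1, !Rmult_1_r, Rmult_1_l.
  replace (powr c' (q - 1)) with (exp2 ((- INR J - 1 - INR m) * (q - 1)))
    by (symmetry; apply powr_exp2).
  pose proof (exp2_pos ((- INR J - 1 - INR m) * (q - 1))).
  apply Rle_trans with (exp2 ((- INR J - 1 - INR m) * (q - 1)) * 1);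
    [apply Rmult_le_compat_l; lra|rewrite Rmult_1_r].
  replace ((- INR J - 1 - INR m) * (q - 1))
    with ((- INR J - 1) * (q - 1) + (q + (- (INR m + 1) * (q - 1) - 1))) by ring.
  rewrite Rmult_assoc, powr_2, !exp2_plus.
  pose proof (exp2_pos q). pose proof (exp2_pos (- (INR m + 1) * (q - 1) - 1)).
  apply Rmult_le_compat; auto.
  - left; apply exp2_pos.
  - left; apply Rmult_lt_0_compat; auto.
  - apply Rmult_le_compat_l; [lra|apply S0_ge].
Qed.

Lemma powsum_conv_le_dyadic_pairs :
  powsum m q (conv m mu nu) <= powr 2 q * (E * E * S0) + powr 2 q * powr (INR L) q *
    sumN L (fun i => powr 2 q * (E * E * powr 2 q * S0 + powr (INR L') q *
      sumN L' (fun i' => powsum m q (conv m (F i) (G i'))))).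
Proof.
  assert (Hmu01 := measure_le1 m mu). assert (Hnu01 := measure_le1 m nu).
  eapply Rle_trans.
  { apply (powsum_conv_decomp m q mu nu (low_part c mu) (low_part c' nu) F G L L'); try lra.
    - intros k Hk. pose proof (Hmu01 k Hmu Hk). destruct (low_part_bounds c mu k); lra.
    - intros k Hk. pose proof (Hnu01 k Hnu Hk). destruct (low_part_bounds c' nu k); lra.
    - intros i k Hk. apply restrict_dyadic_band_bounds, Hmu01; auto.
    - intros i k Hk. apply restrict_dyadic_band_bounds, Hnu01; auto.
    - intros k Hk. split; [apply Hmu01; auto|].
      apply low_part_dyadic_split; [auto|apply Hmu01; auto|apply dyadic_levels_cover_mu].
    - intros k Hk. split; [apply Hnu01; auto|].
      apply low_part_dyadic_split; [auto|apply Hnu01; auto|apply dyadic_levels_cover_nu]. }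
  pose proof (powr_gt0 2 q ltac:(lra)). pose proof (powr_nonneg (INR L) q).
  pose proof (powr_nonneg (INR L') q).
  apply Rplus_le_compat.
  - apply Rmult_le_compat_l; [lra|apply powsum_conv_low_part_mu].
  - apply Rmult_le_compat_l; [nra|]. apply sumN_le. intros i _.
    apply Rmult_le_compat_l; [lra|]. apply Rplus_le_compat_r, powsum_conv_low_part_nu.
Qed.

Lemma powsum_conv_le_of_light_pairs :
  (forall i i', (i < L)%nat -> (i' < L')%nat ->
     powsum m q (conv m (F i) (G i')) <= powr 4 q * (E * E) * S0) ->
  powsum m q (conv m mu nu)
    <= 3 * powr 16 q * (powr (INR L) (q + 1) * powr (INR L') (q + 1)) * (E * E * S0).
Proof.
  intros Hlight.
  set (t := powr 2 q). set (Z := E * E * S0).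
  set (PL := powr (INR L) (q + 1)). set (PL' := powr (INR L') (q + 1)).
  assert (Ht : 1 <= t) by (apply powr_ge1; lra).
  assert (H4 : powr 4 q = t * t) by (unfold t; rewrite <- powr_mul by lra; f_equal; ring).
  assert (H16 : powr 16 q = t * t * (t * t))
    by (unfold t; rewrite <- !powr_mul by lra; f_equal; ring).
  assert (HPL : 1 <= PL) by (apply powr_ge1; [lra|]; unfold L; rewrite !plus_INR; simpl (INR 1);
    pose proof (pos_INR J); pose proof (pos_INR m); pose proof (pos_INR K); lra).
  assert (HPL' : 1 <= PL') by (apply powr_ge1; [lra|]; unfold L'; rewrite !plus_INR; simpl (INR 1);
    pose proof (pos_INR J); pose proof (pos_INR m); lra).
  assert (HZ : 0 < Z) by (unfold Z; repeat apply Rmult_lt_0_compat; auto).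
  eapply Rle_trans; [apply powsum_conv_le_dyadic_pairs|]. fold t Z.
  eapply Rle_trans.
  { apply Rplus_le_compat_l, Rmult_le_compat_l; [pose proof (powr_nonneg (INR L) q); nra|].
    apply sumN_le with (g := fun _ => t * (Z * t + powr (INR L') q * (INR L' * (t * t * Z)))).
    intros i Hi. apply Rmult_le_compat_l; [lra|]. unfold Z. rewrite Rmult_assoc.
    rewrite (Rmult_comm t S0), <- Rmult_assoc. apply Rplus_le_compat_l.
    apply Rmult_le_compat_l; [apply powr_nonneg|].
    rewrite <- sumN_const. apply sumN_le. intros i' Hi'. rewrite <- H4, <- Rmult_assoc.
    apply Hlight; auto. }
  rewrite sumN_const, H16. fold PL PL'.
  replace (t * Z + t * powr (INR L) q * (INR L * (t * (Z * t + powr (INR L') q * (INR L' * (t * t * Z))))))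
    with ((t + t * t * t * (powr (INR L) q * INR L)
           + t * t * (t * t) * ((powr (INR L) q * INR L) * (powr (INR L') q * INR L'))) * Z)
    by ring.
  unfold PL, PL'. rewrite <- !powr_succ by apply pos_INR. fold PL PL'.
  assert (HPP : 1 <= PL * PL') by nra.
  assert (Ht3 : t <= t * t * t) by nra. assert (Ht4 : t * t * t <= t * t * (t * t)) by nra.
  assert (t <= t * t * (t * t) * (PL * PL')) by nra.
  assert (t * t * t * PL <= t * t * (t * t) * (PL * PL')) by nra.
  replace (3 * (t * t * (t * t)) * (PL * PL') * Z)
    with ((3 * (t * t * (t * t)) * (PL * PL')) * Z) by ring.
  apply Rmult_le_compat_r; lra.
Qed.

(* The light pairs alone would give at most [3/4] of the assumed lower bound [E ||mu||_q^q]. *)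
Lemma exists_heavy_dyadic_pair : exists i i', (i < L)%nat /\ (i' < L')%nat /\
  powr 4 q * (E * E) * S0 <= powsum m q (conv m (F i) (G i')).
Proof.
  apply NNPP. intros Hnone.
  assert (Hbound := powsum_conv_le_of_light_pairs).
  enough (powsum m q (conv m mu nu) <= 3 / 4 * (E * S0)).
  { pose proof (Rmult_lt_0_compat E S0 HE S0_pos). fold S0 in Hconv. lra. }
  eapply Rle_trans.
  { apply Hbound. intros i i' Hi Hi'. apply Rlt_le, Rnot_le_lt. intros H. apply Hnone. eauto. }
  replace (3 * powr 16 q * (powr (INR L) (q + 1) * powr (INR L') (q + 1)) * (E * E * S0))
    with (3 / 4 * (E * S0) * (4 * powr 16 q * (powr (INR L) (q + 1) * powr (INR L') (q + 1)) * E))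
    by field.
  pose proof (Rmult_lt_0_compat E S0 HE S0_pos). 
  apply Rle_trans with (3 / 4 * (E * S0) * 1); [apply Rmult_le_compat_l; lra|lra].
Qed.

End Levels.

(** * Asymptotics and the main theorem *)

Lemma up_nat x : 0 <= x -> x <= INR (Z.to_nat (up x)).
Proof.
  intros Hx. destruct (archimed x) as [H1 H2].
  assert (0 < up x)%Z by (apply lt_IZR; lra).
  rewrite INR_IZR_INZ, Z2Nat.id by lia. lra.
Qed.

Lemma floor_nat x : 0 <= x -> exists n : nat, INR n <= x < INR n + 1.
Proof.
  intros Hx. exists (Z.to_nat (up x - 1)). destruct (archimed x) as [H1 H2].
  assert (0 < up x)%Z by (apply lt_IZR; lra).
  rewrite INR_IZR_INZ, Z2Nat.id, minus_IZR by lia. lra.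
Qed.

Lemma exp_INR_mult k y : exp (INR k * y) = exp y ^ k.
Proof.
  induction k; [simpl; rewrite Rmult_0_l; apply exp_0|].
  rewrite S_INR, Rmult_plus_distr_r, Rmult_1_l, exp_plus, IHk. simpl. ring.
Qed.

(* Via [exp y >= (y / (n+1)) ^ (n+1)] with [n >= p]. *)
Lemma powr_le_exp2_eventually C a b p d : 0 < C -> 0 < a -> 0 <= b -> 0 < p -> 0 < d ->
  exists M0, forall m, (M0 <= m)%nat -> C * powr (a * INR m + b) p <= exp2 (d * INR m).
Proof.
  intros HC Ha Hb Hp Hd.
  set (n := Z.to_nat (up p)). assert (Hn : p <= INR n) by (apply up_nat; lra).
  set (A := a + b + 1). set (g := d * ln 2).
  assert (Hg : 0 < g) by (unfold g; pose proof ln_lt_2; nra).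
  assert (HSn : 0 < INR (S n)) by (apply lt_0_INR; lia).
  set (D := (g / INR (S n)) ^ (S n)).
  assert (HD : 0 < D) by (apply pow_lt, Rdiv_lt_0_compat; lra).
  set (B := C * A ^ n / D).
  exists (S (Z.to_nat (up (Rmax B 0)))). intros m Hm.
  assert (Hm1 : 1 <= INR m) by (apply (le_INR 1); lia).
  assert (HmB : B <= INR m).
  { pose proof (up_nat (Rmax B 0) (Rmax_r _ _)). apply le_INR in Hm. rewrite S_INR in Hm.
    pose proof (Rmax_l B 0). lra. }
  apply Rle_trans with (C * (A ^ n * INR m ^ n)).
  { apply Rmult_le_compat_l; [lra|].
    apply Rle_trans with (powr (a * INR m + b + 1) p); [apply powr_le; nra|].
    apply Rle_trans with (powr (a * INR m + b + 1) (INR n)); [apply powr_le_exp; nra|].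
    rewrite powr_pos, Rpower_pow, <- Rpow_mult_distr by nra.
    apply pow_incr. unfold A. nra. }
  unfold exp2, Rpower. replace (d * INR m * ln 2) with (INR (S n) * (g * INR m / INR (S n)))
    by (unfold g; field; lra).
  rewrite exp_INR_mult.
  apply Rle_trans with ((g * INR m / INR (S n)) ^ (S n)).
  2:{ apply pow_incr. split.
      - left; apply Rdiv_lt_0_compat; nra.
      - pose proof (exp_ineq1_le (g * INR m / INR (S n))). lra. }
  replace (g * INR m / INR (S n)) with (g / INR (S n) * INR m) by (field; lra).
  rewrite Rpow_mult_distr. fold D. simpl (INR m ^ S n).
  assert (C * A ^ n <= D * INR m).
  { unfold B in HmB. apply Rmult_le_reg_r with (/ D); [apply Rinv_0_lt_compat; lra|].
    replace (D * INR m * / D) with (INR m) by (field; lra). lra. }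
  assert (0 <= INR m ^ n) by (apply pow_le; lra). nra.
Qed.

Lemma dyadic_count_small eps q K : 0 < eps -> 1 < q ->
  exists M0, forall m J, (M0 <= m)%nat -> INR J <= 2 * eps * conj_exp q * INR m ->
    4 * powr 16 q * (powr (INR (J + 1 + m + K)) (q + 1) * powr (INR (J + 1 + m)) (q + 1))
      * exp2 (- (eps * INR m) * q) <= 1.
Proof.
  intros Heps Hq.
  assert (Hq' : 0 < conj_exp q) by (apply Rdiv_lt_0_compat; lra).
  set (a := 2 * eps * conj_exp q + 1). set (b := 1 + INR K).
  assert (Ha : 0 < a) by (unfold a; pose proof (Rmult_lt_0_compat _ _ Heps Hq'); lra).
  assert (Hb : 0 <= b) by (unfold b; pose proof (pos_INR K); lra).
  pose proof (powr_gt0 16 q ltac:(lra)).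
  destruct (powr_le_exp2_eventually (4 * powr 16 q) a b (2 * q + 2) (eps * q)) as [M0 HM0];
    try nra.
  exists M0. intros m J Hm HJ. pose proof (pos_INR m). pose proof (pos_INR J).
  assert (Hab : 0 <= a * INR m + b) by nra.
  assert (HL : forall n, (n <= J + 1 + m + K)%nat ->
            powr (INR n) (q + 1) <= powr (a * INR m + b) (q + 1)).
  { intros n Hnle. apply le_INR in Hnle. rewrite !plus_INR in Hnle. simpl (INR 1) in Hnle.
    apply powr_le; [lra|]. split; [apply pos_INR|]. unfold a, b. nra. }
  apply Rle_trans with (4 * powr 16 q * powr (a * INR m + b) (2 * q + 2) * exp2 (- (eps * INR m) * q)).
  - apply Rmult_le_compat_r; [left; apply exp2_pos|]. apply Rmult_le_compat_l; [lra|].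
    replace (2 * q + 2) with ((q + 1) + (q + 1)) by ring.
    rewrite (powr_plus (q + 1) (q + 1) (a * INR m + b)) by lra.
    apply Rmult_le_compat; try apply powr_nonneg; apply HL; lia.
  - apply Rle_trans with (exp2 (eps * q * INR m) * exp2 (- (eps * INR m) * q)).
    + apply Rmult_le_compat_r; [left; apply exp2_pos|]. apply HM0; auto.
    + rewrite <- exp2_plus, <- exp2_0. right. f_equal. ring.
Qed.

Lemma threshold_tail eps q m J : 1 < q ->
  2 * eps * conj_exp q * INR m < INR J + 1 ->
  exp2 ((- INR J - 1) * (q - 1)) <= exp2 (- (eps * INR m) * q) * exp2 (- (eps * INR m) * q).
Proof.
  intros Hq HJ. rewrite <- exp2_plus. apply exp2_le.
  assert (H : 2 * eps * conj_exp q * INR m * (q - 1) <= (INR J + 1) * (q - 1))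
    by (apply Rmult_le_compat_r; lra).
  replace (2 * eps * conj_exp q * INR m * (q - 1)) with (2 * eps * INR m * q) in H
    by (unfold conj_exp; field; lra).
  lra.
Qed.

Lemma powsum_ge_of_lqnorm_ge m q d f g : 0 < q ->
  lqnorm m q g >= Rpower 2 d * lqnorm m q f -> exp2 (d * q) * powsum m q f <= powsum m q g.
Proof.
  intros Hq H. rewrite <- powr_exp2.
  apply powr_le_of_root_le; auto; try apply powsum_nonneg; [left; apply exp2_pos|].
  rewrite <- !lqnorm_powsum. apply Rge_le, H.
Qed.

Lemma IZR_sub_of_nat_le J i : IZR (Z.of_nat J - Z.of_nat i) <= INR J.
Proof. rewrite minus_IZR, <- !INR_IZR_INZ. pose proof (pos_INR i). lra. Qed.

Lemma exp2_level_of_nat J i x :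
  exp2 (IZR (- (Z.of_nat J - Z.of_nat i) - 1) + x) = 2 ^ i * exp2 (- INR J - 1 + x) /\
  exp2 (IZR (- (Z.of_nat J - Z.of_nat i)) + x) = 2 * (2 ^ i * exp2 (- INR J - 1 + x)).
Proof.
  rewrite minus_IZR, opp_IZR, minus_IZR, <- !INR_IZR_INZ, <- exp2_INR, <- exp2_1.
  rewrite <- !exp2_plus. split; f_equal; ring.
Qed.

Lemma indA_dyadic_band m q mu J i :
  indA m q mu (Z.of_nat J - Z.of_nat i) =
  dyadic_band (2 ^ i * (exp2 (- INR J - 1) * powr (lqnorm m q mu) (conj_exp q))) mu.
Proof.
  unfold indA, dyadic_band. cbv zeta. rewrite !powerRZ_exp2.
  destruct (exp2_level_of_nat J i 0) as [H1 H2]. rewrite !Rplus_0_r in H1, H2.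
  rewrite H1, H2. f_equal; ring.
Qed.

Lemma indB_dyadic_band m nu J i :
  indB m nu (Z.of_nat J - Z.of_nat i) = dyadic_band (2 ^ i * exp2 (- INR J - 1 - INR m)) nu.
Proof.
  unfold indB, dyadic_band. cbv zeta.
  rewrite !powerRZ_exp2, opp_IZR, <- INR_IZR_INZ, <- !exp2_plus.
  destruct (exp2_level_of_nat J i (- INR m)) as [H1 H2]. rewrite H1, H2. reflexivity.
Qed.

Lemma heavy_level_pair_properties m q mu nu J i i' e :
  1 < q -> is_measure m mu -> is_measure m nu -> 0 <= e ->
  powr 4 q * powr e q * powsum m q mu <= powsum m q
    (conv m (restrict (dyadic_band (2 ^ i * (exp2 (- INR J - 1)
                                     * powr (lqnorm m q mu) (conj_exp q))) mu) mu)
            (restrict (dyadic_band (2 ^ i' * exp2 (- INR J - 1 - INR m)) nu) nu)) ->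
  lqnorm m q (conv m (indA m q mu (Z.of_nat J - Z.of_nat i)) (indB m nu (Z.of_nat J - Z.of_nat i')))
    >= e * lqnorm m q (indA m q mu (Z.of_nat J - Z.of_nat i))
         * lqnorm m 1 (indB m nu (Z.of_nat J - Z.of_nat i')) /\
  lqnorm m q (restrict (indA m q mu (Z.of_nat J - Z.of_nat i)) mu) >= e * lqnorm m q mu /\
  mass m (indB m nu (Z.of_nat J - Z.of_nat i')) nu >= e.
Proof.
  intros Hq Hmu Hnu He Hheavy. rewrite indA_dyadic_band, indB_dyadic_band.
  assert (HM : 0 < powr (lqnorm m q mu) (conj_exp q))
    by (rewrite lqnorm_pow_conj_exp by auto; apply powr_gt0, powsum_measure_pos; auto).
  assert (Hlev : forall n c, 0 < c -> 0 < 2 ^ n * c)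
    by (intros; apply Rmult_lt_0_compat; [apply pow_lt; lra|auto]).
  assert (Hal : 0 < 2 ^ i * (exp2 (- INR J - 1) * powr (lqnorm m q mu) (conj_exp q)))
    by (apply Hlev, Rmult_lt_0_compat; [apply exp2_pos|auto]).
  assert (Hbe : 0 < 2 ^ i' * exp2 (- INR J - 1 - INR m)) by (apply Hlev, exp2_pos).
  split; [|split]; apply Rle_ge.
  - eapply heavy_conv_lqnorm_ge; try exact Hheavy; eauto.
  - eapply heavy_restrict_lqnorm_ge; try exact Hheavy; eauto.
  - eapply heavy_mass_ge; try exact Hheavy; eauto.
Qed.

Theorem mainTheorem8 :
  forall (eps q : R), 0 < eps -> 1 < q ->
  exists M0 : nat, forall m : nat, (M0 <= m)%nat ->
  forall mu nu : nat -> R,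
    is_measure m mu -> is_measure m nu ->
    lqnorm m q (conv m mu nu) >= Rpower 2 (- (eps * INR m)) * lqnorm m q mu ->
    exists j j' : Z,
      IZR j <= 2 * eps * conj_exp q * INR m /\
      IZR j' <= 2 * eps * conj_exp q * INR m /\
      lqnorm m q (conv m (indA m q mu j) (indB m nu j'))
        >= Rpower 2 (- (2 * eps * INR m)) * lqnorm m q (indA m q mu j)
           * lqnorm m 1 (indB m nu j') /\
      lqnorm m q (restrict (indA m q mu j) mu)
        >= Rpower 2 (- (2 * eps * INR m)) * lqnorm m q mu /\
      mass m (indB m nu j') nu >= Rpower 2 (- (2 * eps * INR m)).
Proof.
  intros eps q Heps Hq.
  set (K := S (Z.to_nat (up (1 / (q - 1))))).
  assert (HK : 1 + 1 / (q - 1) <= INR K).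
  { unfold K. rewrite S_INR. pose proof (up_nat (1 / (q - 1))).
    assert (0 <= 1 / (q - 1)) by (left; apply Rdiv_lt_0_compat; lra). lra. }
  destruct (dyadic_count_small eps q K Heps Hq) as [M0 HM0].
  exists M0. intros m Hm mu nu Hmu Hnu Hconv.
  assert (HX : 0 <= 2 * eps * conj_exp q * INR m).
  { pose proof (pos_INR m). assert (0 < conj_exp q) by (apply Rdiv_lt_0_compat; lra).
    apply Rmult_le_pos; [nra|lra]. }
  destruct (floor_nat _ HX) as [J [HJle HJlt]].
  set (E := exp2 (- (eps * INR m) * q)).
  destruct (exists_heavy_dyadic_pair m q E mu nu J K) as [i [i' [_ [_ Hheavy]]]]; auto.
  - apply exp2_pos.
  - apply threshold_tail; auto.
  - apply powsum_ge_of_lqnorm_ge; auto; lra.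
  - exists (Z.of_nat J - Z.of_nat i)%Z, (Z.of_nat J - Z.of_nat i')%Z.
    pose proof (IZR_sub_of_nat_le J i). pose proof (IZR_sub_of_nat_le J i').
    split; [lra|]. split; [lra|].
    apply heavy_level_pair_properties; auto; [left; apply exp2_pos|].
    replace (powr (Rpower 2 (- (2 * eps * INR m))) q) with (E * E); auto.
    unfold E. rewrite powr_exp2, <- exp2_plus. f_equal. ring.
Qed.
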